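(* Let $R=\prod_{i=1}^nR_i$ be a direct product of left localization maximal rings $R_1,\ldots,R_n$. Then every nonzero element of $R$ is left localizable if and only if $R_1,\ldots,R_n$ are division rings.
   Context: All rings are associative with $1$. A multiplicative subset $S$ of $R$ ($1\in S$, $0\notin S$, closed under multiplication) is a left Ore set if $Sr\cap Rs\neq\emptyset$ for all $r\in R$, $s\in S$; for it, $\mathrm{ass}(S):=\{r\in R: sr=0\text{ for some } s\in S\}$. A left Ore set $S$ is a left denominator set if $rs=0$ ($r\in R$, $s\in S$) implies $tr=0$ for some $t\in S$; $\mathrm{Den}_l(R)$ denotes the set of left denominator sets. An element $r\in R$ is left localizable if $r\in S$ for some $S\in\mathrm{Den}_l(R)$. For a ring $A$, $S_0(A)$ is the largest left Ore set of $A$ consisting of regular elements and $Q_l(A):=S_0(A)^{-1}A$. A ring $A$ is a left localization maximal ring if $A=Q_l(A)$ (i.e. $S_0(A)$ consists of units) and $\{\mathrm{ass}(S):S\in\mathrm{Den}_l(A)\}=\{0\}$. *)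

From HB Require Import structures.
From mathcomp Require Import all_boot all_order all_algebra.
Set Implicit Arguments. Unset Strict Implicit. Unset Printing Implicit Defensive.
Import GRing.Theory.
Local Open Scope ring_scope.

Section ProdRing.
Variables (n : nat) (R : 'I_n -> pzRingType).

Definition prod_ring := {dffun forall i : 'I_n, R i : choiceType}.
HB.instance Definition _ := Choice.copy prod_ring {dffun forall i : 'I_n, R i : choiceType}.

Definition prod_zero : prod_ring := [ffun i => 0].
Definition prod_one : prod_ring := [ffun i => 1].
Definition prod_add (x y : prod_ring) : prod_ring := [ffun i => x i + y i].
Definition prod_opp (x : prod_ring) : prod_ring := [ffun i => - x i].
Definition prod_mul (x y : prod_ring) : prod_ring := [ffun i => x i * y i].

Lemma prod_addA : associative prod_add.
Proof. by move=> x y z; apply/ffunP=> i; rewrite !ffunE addrA. Qed.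
Lemma prod_addC : commutative prod_add.
Proof. by move=> x y; apply/ffunP=> i; rewrite !ffunE addrC. Qed.
Lemma prod_add0 : left_id prod_zero prod_add.
Proof. by move=> x; apply/ffunP=> i; rewrite !ffunE add0r. Qed.
Lemma prod_addN : left_inverse prod_zero prod_opp prod_add.
Proof. by move=> x; apply/ffunP=> i; rewrite !ffunE addNr. Qed.

HB.instance Definition _ := GRing.isZmodule.Build prod_ring
  prod_addA prod_addC prod_add0 prod_addN.

Lemma prod_mulA : associative prod_mul.
Proof. by move=> x y z; apply/ffunP=> i; rewrite !ffunE mulrA. Qed.
Lemma prod_mul1 : left_id prod_one prod_mul.
Proof. by move=> x; apply/ffunP=> i; rewrite !ffunE mul1r. Qed.
Lemma prod_mulr1 : right_id prod_one prod_mul.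
Proof. by move=> x; apply/ffunP=> i; rewrite !ffunE mulr1. Qed.
Lemma prod_mulDl : left_distributive prod_mul prod_add.
Proof. by move=> x y z; apply/ffunP=> i; rewrite !ffunE mulrDl. Qed.
Lemma prod_mulDr : right_distributive prod_mul prod_add.
Proof. by move=> x y z; apply/ffunP=> i; rewrite !ffunE mulrDr. Qed.

HB.instance Definition _ := GRing.Zmodule_isPzRing.Build prod_ring
  prod_mulA prod_mul1 prod_mulr1 prod_mulDl prod_mulDr.

Lemma prod_ringE (x y : prod_ring) (i : 'I_n) :
  [/\ (x * y) i = x i * y i, (x + y) i = x i + y i,
      (0 : prod_ring) i = 0 & (1 : prod_ring) i = 1].
Proof. by rewrite /GRing.mul /GRing.add /= !ffunE. Qed.

End ProdRing.

Section Loc.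
Variable A : pzRingType.

(* two-sided unit, without requiring a unitRingType structure *)
Definition is_unit (x : A) : Prop := exists y : A, x * y = 1 /\ y * x = 1.

Definition regular (x : A) : Prop :=
  (forall y : A, x * y = 0 -> y = 0) /\ (forall y : A, y * x = 0 -> y = 0).

Definition multiplicative (S : A -> Prop) : Prop :=
  [/\ S 1, ~ S 0 & forall s t, S s -> S t -> S (s * t)].

Definition left_ore (S : A -> Prop) : Prop :=
  multiplicative S /\
  forall (r s : A), S s -> exists s' r' : A, S s' /\ s' * r = r' * s.

Definition ass (S : A -> Prop) : A -> Prop :=
  fun r => exists s, S s /\ s * r = 0.

Definition left_denominator (S : A -> Prop) : Prop :=
  left_ore S /\
  forall (r s : A), S s -> r * s = 0 -> exists t, S t /\ t * r = 0.

Definition left_localizable (r : A) : Prop :=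
  exists S : A -> Prop, left_denominator S /\ S r.

(* S_0(A): the largest left Ore set consisting of regular elements,
   i.e. the union of all left Ore sets consisting of regular elements. *)
Definition S0 : A -> Prop :=
  fun r => exists S : A -> Prop,
    [/\ left_ore S, (forall s, S s -> regular s) & S r].

(* A is a left localization maximal ring: A = Q_l(A) (S_0(A) consists of units)
   and {ass(S) : S ∈ Den_l(A)} = {0}. *)
Definition left_loc_maximal : Prop :=
  (forall s, S0 s -> is_unit s) /\
  (forall S, left_denominator S -> forall r, ass S r <-> r = 0).

Definition division_ring : Prop :=
  (1 : A) <> 0 /\ forall x : A, x <> 0 -> is_unit x.

End Loc.

(** If every nonzero element of the product is left localizable,
    fix [x <> 0] in [R i] and a left denominator set [S] containing the element
    of the product that is [x] at [i] and [0] elsewhere. No element of [S]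
    vanishes at [i], so the [i]-th projection of [S] is a left denominator set
    of [R i]. Since [R i] is left localization maximal, that set has zero
    annihilator, hence consists of regular elements, hence lies in [S0 (R i)],
    hence consists of units; in particular [x] is a unit.
    Conversely, in a product of division rings a nonzero [r] lies in the set of
    elements that are nonzero wherever [r] is, and this set is a left
    denominator set: the idempotent supported on the support of [r] witnesses
    the Ore and the denominator conditions coordinatewise. *)
From Pilot Require Import Defs.
From HB Require Import structures.
From mathcomp Require Import all_boot all_order all_algebra.
Local Open Scope ring_scope.
Import GRing.Theory.

Section LeftLocalizationMaximal.
Context {A : pzRingType}.

Lemma left_denominator_regular {S : A -> Prop} :
  left_denominator S -> (forall r, ass S r -> r = 0) ->
  forall s, S s -> regular s.
Proof.
move=> [_ den] ass0 s Ss; split=> y sy0; apply: ass0.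
- by exists s.
- by have [t [St ty0]] := den y s Ss sy0; exists t.
Qed.

Lemma left_loc_maximal_denominator_unit {S : A -> Prop} :
  left_loc_maximal A -> left_denominator S -> forall s, S s -> is_unit s.
Proof.
move=> [S0_unit ass0] denS s Ss; apply: S0_unit; exists S; split=> //.
- exact: denS.1.
- by apply: left_denominator_regular => // r /(ass0 S denS).
Qed.

End LeftLocalizationMaximal.

Lemma division_ring_mul_eq0 {A : pzRingType} {a b : A} :
  division_ring A -> a * b = 0 -> a = 0 \/ b = 0.
Proof.
move=> [_ divA] ab0; have [-> | a0] := eqVneq a 0; first by left.
right; have [y [_ ya]] := divA a (elimN eqP a0).
by rewrite -[b]mul1r -ya -mulrA ab0 mulr0.
Qed.

Section ProductRing.
Context {n : nat} {R : 'I_n -> nzRingType}.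
Implicit Types (r s t : prod_ring R).

Lemma prod_mulE r s j : (r * s) j = r j * s j.
Proof. by case: (prod_ringE r s j). Qed.

Lemma prod_0E j : (0 : prod_ring R) j = 0.
Proof. by case: (prod_ringE (0 : prod_ring R) 0 j). Qed.

Lemma prod_1E j : (1 : prod_ring R) j = 1.
Proof. by case: (prod_ringE (0 : prod_ring R) 0 j). Qed.

Lemma prod_eq0 r : (forall j, r j = 0) -> r = 0.
Proof. by move=> r0; apply/ffunP=> j; rewrite r0 prod_0E. Qed.

Definition prod_lift {i} (a : R i) : prod_ring R :=
  [ffun j => dfwith (fun k => 0 : R k) a j].

Lemma prod_lift_in {i} (a : R i) : prod_lift a i = a.
Proof. by rewrite ffunE dfwith_in. Qed.

Lemma prod_lift_out {i} (a : R i) j : i != j -> prod_lift a j = 0.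
Proof. by move=> ij; rewrite ffunE dfwith_out. Qed.

Lemma prod_lift_neq0 {i} (a : R i) : a <> 0 -> prod_lift a <> 0.
Proof. by move=> a0 la0; apply: a0; rewrite -(prod_lift_in a) la0 prod_0E. Qed.

Lemma prod_lift_mull {i} (a : R i) s : s i = 0 -> s * prod_lift a = 0.
Proof.
move=> si0; apply: prod_eq0 => j; rewrite prod_mulE.
by have [<- | ij] := eqVneq i j; rewrite ?si0 ?mul0r // prod_lift_out ?mulr0.
Qed.

Lemma prod_lift_mulr {i} (a : R i) s : a * s i = 0 -> prod_lift a * s = 0.
Proof.
move=> as0; apply: prod_eq0 => j; rewrite prod_mulE.
by have [<- | ij] := eqVneq i j; rewrite ?prod_lift_in // prod_lift_out ?mul0r.
Qed.

Definition proj_set (S : prod_ring R -> Prop) i : R i -> Prop :=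
  fun a => exists2 s, S s & s i = a.

Lemma proj_left_denominator {S : prod_ring R -> Prop} {i} :
  left_denominator S -> (forall s, S s -> s i <> 0) ->
  left_denominator (proj_set S i).
Proof.
move=> [[[S1 _ SM] ore] den] Si0.
have mulS : Defs.multiplicative (proj_set S i).
  split.
  - by exists 1; rewrite ?prod_1E.
  - by move=> [s Ss si0]; exact: Si0 Ss si0.
  - move=> _ _ [s Ss <-] [t St <-].
    by exists (s * t); [exact: SM | rewrite prod_mulE].
split; first split=> // a _ [s Ss <-].
  have [s' [r' [Ss' ore_eq]]] := ore (prod_lift a) s Ss.
  exists (s' i), (r' i); split; first by exists s'.
  by rewrite -(prod_lift_in a) -!prod_mulE ore_eq.
move=> a _ [s Ss <-] as0.
have [t [St ta0]] := den _ _ Ss (prod_lift_mulr _ _ as0).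
by exists (t i); split; [exists t | rewrite -(prod_lift_in a) -prod_mulE ta0 prod_0E].
Qed.

Lemma left_localizable_lift_unit {i} (x : R i) :
  left_loc_maximal (R i) -> x <> 0 -> left_localizable (prod_lift x) ->
  is_unit x.
Proof.
move=> maxRi x0 [S [denS Sx]].
have Si0 s : S s -> s i <> 0.
  have [[[_ S0 SM] _] _] := denS.
  by move=> Ss si0; apply: S0; rewrite -(prod_lift_mull x _ si0); exact: SM.
apply: (left_loc_maximal_denominator_unit maxRi (proj_left_denominator denS Si0)).
by exists (prod_lift x); rewrite ?prod_lift_in.
Qed.

Hypothesis divR : forall j, division_ring (R j).

Definition supp_set r : prod_ring R -> Prop :=
  fun s => forall j, r j <> 0 -> s j <> 0.

Lemma supp_set_left_denominator r : r <> 0 -> left_denominator (supp_set r).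
Proof.
move=> r0.
pose e : prod_ring R := [ffun j => if r j == 0 then 0 else 1].
have eE j : r j <> 0 -> e j = 1 by move=> /eqP rj0; rewrite ffunE (negPf rj0).
have eE0 j : r j = 0 -> e j = 0 by move=> rj0; rewrite ffunE rj0 eqxx.
have Se : supp_set r e by move=> j /eE ->; exact/eqP/oner_neq0.
have mulS : Defs.multiplicative (supp_set r).
  split.
  - by move=> j _; rewrite prod_1E; exact/eqP/oner_neq0.
  - move=> S0; apply: r0; apply: prod_eq0 => j.
    have [// | /eqP rj0] := eqVneq (r j) 0.
    by case: (S0 j rj0); rewrite prod_0E.
  - move=> s t Ss St j rj0; rewrite prod_mulE.
    by case/(division_ring_mul_eq0 (divR j)); [exact: Ss | exact: St].
split; first split=> // a s Ss.
  have ore_j j : exists y : R j, e j * a j = y * s j.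
    have [rj0 | /eqP rj0] := eqVneq (r j) 0.
      by exists 0; rewrite eE0 // !mul0r.
    have [y [_ ys]] := (divR j).2 _ (Ss j rj0).
    by exists (a j * y); rewrite eE // mul1r -mulrA ys mulr1.
  have [y ore_y] := fin_all_exists ore_j.
  exists e, (finfun y); split=> //; apply/ffunP=> j.
  by rewrite !prod_mulE ore_y ffunE.
move=> a s Ss as0; exists e; split=> //; apply: prod_eq0 => j.
rewrite prod_mulE; have [rj0 | /eqP rj0] := eqVneq (r j) 0; first by rewrite eE0 ?mul0r.
have /(division_ring_mul_eq0 (divR j)) : a j * s j = 0 by rewrite -prod_mulE as0 prod_0E.
by case=> [-> | /(Ss j rj0)//]; rewrite mulr0.
Qed.

End ProductRing.

Theorem corollary2p10 (n : nat) (R : 'I_n -> nzRingType) :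
  (forall i : 'I_n, left_loc_maximal (R i)) ->
  ((forall r : prod_ring R, r <> 0 -> left_localizable r) <->
   (forall i : 'I_n, division_ring (R i))).
Proof.
move=> maxR; split=> [loc i | divR r r0].
- split=> [|x x0]; first exact/eqP/oner_neq0.
  exact: left_localizable_lift_unit x (maxR i) x0 (loc _ (prod_lift_neq0 x x0)).
- by exists (supp_set r); split; [exact: supp_set_left_denominator | by []].
Qed.
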